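(* Let $d$ be an extended $K$-quasi-metric on $X$ with point at infinity $\infty$, let $o\in X\setminus\{\infty\}$ and let $d'=d_o$ be the involution of $d$ at $o$. Fix $\epsilon>0$. Then for every $\delta<\epsilon/K^2$ and every $\delta$-covering $\{B_{d,r_i}(x_i)\}_i$ of $X\setminus\{\infty\}$, some subfamily of $\{B_{d',K^3r_i/\epsilon^2}(x_i)\}_i$ is a $\frac{K^3}{\epsilon^2}\delta$-covering of $X\setminus(\{\infty\}\cup B_{d,\epsilon}(o))$.
   Context: A $K$-quasi-metric ($K\ge1$) is a symmetric map $d:X\times X\to[0,\infty)$ with $d(x,y)=0\iff x=y$ and $d(x,y)\le K\max(d(x,z),d(z,y))$; it is extended with point at infinity $\infty\in X$ if $d(x,\infty)=\infty$ for $x\neq\infty$ and all other distances are finite (with the same axioms). The involution at $o\ne\infty$: $d_o(x,x)=0$, $d_o(x,y)=\frac{d(x,y)}{d(x,o)d(o,y)}$ for distinct $x,y\ne\infty$, $d_o(\infty,y)=1/d(o,y)$, $d_o(x,\infty)=1/d(x,o)$ for distinct points, with $\lambda/0=\infty$ for $\lambda>0$. For a distance $\rho$ on $X$, $B_{\rho,r}(x)=\{y\in X:\rho(x,y)\le r\}$ is the closed ball. A $\delta$-covering of a set $A$ with respect to $\rho$ is a family of closed $\rho$-balls $B_{\rho,r_i}(x_i)$ with $r_i\le\delta$ whose union contains $A$. *)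

From mathcomp Require Import all_boot all_order all_algebra.
From mathcomp Require Import all_classical all_reals.
From mathcomp Require Import ereal.
Set Implicit Arguments. Unset Strict Implicit. Unset Printing Implicit Defensive.
Import Order.TTheory GRing.Theory Num.Theory.
Local Open Scope classical_set_scope.
Local Open Scope ring_scope.

Definition ext_quasi_metric (R : realType) (X : Type) (K : R)
  (d : X -> X -> \bar R) (inf : X) : Prop :=
  1 <= K /\
  (forall x y, d x y = d y x) /\
  (forall x y, (0 <= d x y)%E) /\
  (forall x y, d x y = 0%E <-> x = y) /\
  (forall x y z, (d x y <= K%:E * maxe (d x z) (d z y))%E) /\
  (forall x, x <> inf -> d x inf = +oo%E) /\
  (forall x y, x <> inf -> y <> inf -> d x y \is a fin_num).

Definition ediv0 (R : realType) (lam t : R) : \bar R :=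
  if t == 0 then +oo%E else (lam / t)%:E.

Definition involution (R : realType) (X : Type) (d : X -> X -> \bar R)
  (inf o : X) (x y : X) : \bar R :=
  if pselect (x = y) then 0%E
  else if pselect (x = inf) then ediv0 1 (fine (d o y))
  else if pselect (y = inf) then ediv0 1 (fine (d x o))
  else ediv0 (fine (d x y)) (fine (d x o) * fine (d o y)).

Definition cball (R : realType) (X : Type) (rho : X -> X -> \bar R)
  (r : R) (x : X) : set X := [set y | (rho x y <= r%:E)%E].

Definition is_covering (R : realType) (X I : Type) (rho : X -> X -> \bar R)
  (delta : R) (J : set I) (c : I -> X) (r : I -> R) (A : set X) : Prop :=
  (forall i, J i -> r i <= delta) /\
  A `<=` \bigcup_(i in J) cball rho (r i) (c i).

From mathcomp Require Import all_boot all_order all_algebra.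
From mathcomp Require Import all_classical all_reals.
From mathcomp Require Import ereal.
From mathcomp Require Import ring lra.
Set Implicit Arguments. Unset Strict Implicit. Unset Printing Implicit Defensive.
Import Order.TTheory GRing.Theory Num.Theory.
Local Open Scope classical_set_scope.
Local Open Scope ring_scope.

(* The whole family works.  If x is eps-far from o and lies in a d-ball of
   radius r <= delta < eps / K^2 around c, then K d(c, x) < eps, so the
   quasi-triangle inequality d(o, x) <= K max(d(o, c), d(c, x)) forces
   K d(o, c) > eps.  Hence d(c, o) d(o, x) > eps^2 / K, and
   d_o(c, x) = d(c, x) / (d(c, o) d(o, x)) <= K r / eps^2 <= K^3 r / eps^2. *)

Lemma quasi_triangle_far (R : realDomainType) (K eps a b e : R) :
  e <= K * Num.max b a -> K * a < eps -> eps < e -> eps < K * b.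
Proof.
move=> e_le Ka_lt eps_lt; have [ab|ba] := leP b a.
  by move: e_le; rewrite max_r // => /(lt_le_trans eps_lt)/(lt_trans Ka_lt); rewrite ltxx.
by have := lt_le_trans eps_lt e_le; rewrite max_l // ltW.
Qed.

Lemma mulr_lt_of_lt_div_sqr (R : realFieldType) (K eps delta : R) :
  1 <= K -> 0 < eps -> delta < eps / K ^+ 2 -> K * delta < eps.
Proof.
move=> K_ge1 eps_gt0; rewrite ltr_pdivlMr ?exprn_gt0 ?(lt_le_trans ltr01) //.
by rewrite expr2; have [] := leP 0 delta; nra.
Qed.

Section Involution.
Variables (R : realType) (X : Type) (K : R) (d : X -> X -> \bar R) (inf o : X).
Hypothesis dK : ext_quasi_metric K d inf.

Lemma ball_center_neq_inf (c x : X) (r : R) :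
  x <> inf -> (d c x <= r%:E)%E -> c <> inf.
Proof.
move: dK => [_ [dsym [_ [_ [_ [dinf _]]]]]] x_fin + c_inf.
by rewrite c_inf dsym dinf.
Qed.

Lemma involution_le (x y : X) (t : R) :
  x <> inf -> y <> inf -> 0 < fine (d x o) * fine (d o y) ->
  fine (d x y) <= t * (fine (d x o) * fine (d o y)) ->
  (involution d inf o x y <= t%:E)%E.
Proof.
move: dK => [_ [_ [dge0 _]]] x_fin y_fin p_gt0 dxy_le.
have t_ge0 : 0 <= t.
  by have := le_trans (fine_ge0 (dge0 x y)) dxy_le; rewrite pmulr_lge0.
rewrite /involution; case: pselect => [_|x_neq_y] /=; first by rewrite lee_fin.
case: pselect => [//|_] /=; case: pselect => [//|_] /=.
by rewrite /ediv0 gt_eqF // lee_fin ler_pdivrMr.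
Qed.

Hypothesis o_fin : o <> inf.

Lemma involution_ball_le (eps r : R) (c x : X) :
  0 < eps -> K * r < eps -> x <> inf -> ~ (d o x <= eps%:E)%E ->
  (d c x <= r%:E)%E -> (involution d inf o c x <= (K * r / eps ^+ 2)%:E)%E.
Proof.
move: dK => [K_ge1 [dsym [dge0 [_ [dtri [_ dfin]]]]]] eps_gt0 Kr_lt x_fin ox_far cx_le.
have c_fin := ball_center_neq_inf x_fin cx_le.
have ox_gt : eps < fine (d o x).
  by rewrite ltNge -lee_fin fineK ?dfin //; apply/negP.
have cx_le' : fine (d c x) <= r by rewrite -lee_fin fineK ?dfin.
have K_gt0 : 0 < K := lt_le_trans ltr01 K_ge1.
have Kcx_lt : K * fine (d c x) < eps.
  exact: le_lt_trans (ler_wpM2l (ltW K_gt0) cx_le') Kr_lt.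
have co_gt : eps < K * fine (d c o).
  apply: (quasi_triangle_far _ Kcx_lt ox_gt).
  by rewrite -lee_fin EFinM EFin_max !fineK ?dfin // [d c o]dsym dtri.
have co_gt0 : 0 < fine (d c o).
  by rewrite -(pmulr_rgt0 _ K_gt0); apply: lt_trans co_gt.
have prod_gt : eps ^+ 2 < K * (fine (d c o) * fine (d o x)).
  by rewrite mulrA expr2 ltr_pM // ltW.
apply: involution_le => //; first by rewrite mulr_gt0 // (lt_trans eps_gt0).
set p := fine (d c o) * fine (d o x).
have -> : K * r / eps ^+ 2 * p = r * (K * p / eps ^+ 2) by ring.
apply: (le_trans cx_le'); rewrite ler_peMr ?(le_trans (fine_ge0 (dge0 c x))) //.
by rewrite ler_pdivlMr ?exprn_gt0 // mul1r ltW.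
Qed.

End Involution.

Theorem lemma2p2 (R : realType) (X : Type) (K : R) (d : X -> X -> \bar R)
  (inf o : X) (eps : R) :
  ext_quasi_metric K d inf -> o <> inf -> 0 < eps ->
  forall (delta : R), delta < eps / K ^+ 2 ->
  forall (I : Type) (c : I -> X) (r : I -> R),
    is_covering d delta setT c r (~` [set inf]) ->
    exists J : set I,
      is_covering (involution d inf o) (K ^+ 3 / eps ^+ 2 * delta) J c
        (fun i => K ^+ 3 * r i / eps ^+ 2)
        (~` ([set inf] `|` cball d eps o)).
Proof.
move=> dK o_fin eps_gt0 delta delta_lt I c r [r_le cover].
have K_ge1 : 1 <= K by case: dK.
have K_ge0 : 0 <= K := le_trans ler01 K_ge1.
have coef_ge0 : 0 <= K ^+ 3 / eps ^+ 2.
  by rewrite divr_ge0 // exprn_ge0 // ltW.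
exists setT; split=> [i _|x /= x_far].
  by rewrite mulrAC ler_wpM2l // r_le.
have x_fin : x <> inf by move=> x_inf; apply: x_far; left.
have ox_far : ~ (d o x <= eps%:E)%E by move=> ox_le; apply: x_far; right.
have [i _ cx_le] := cover x x_fin; exists i => //.
have r_ge0 : 0 <= r i.
  by rewrite -lee_fin (le_trans _ cx_le) //; case: dK => _ [_ [dge0 _]].
have Kr_lt : K * r i < eps.
  apply: le_lt_trans (mulr_lt_of_lt_div_sqr K_ge1 eps_gt0 delta_lt).
  by rewrite ler_wpM2l ?r_le.
apply: (le_trans (involution_ball_le dK o_fin eps_gt0 Kr_lt x_fin ox_far cx_le)).
rewrite lee_fin; apply: ler_wpM2r; first by rewrite invr_ge0 exprn_ge0 // ltW.
by apply: ler_wpM2r => //; rewrite -[leLHS]expr1; exact: ler_weXn2l.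
Qed.
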